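(* Let $X$ be a real Banach space with $\dim X \ge 2$. Then $0 \le S_P(X) \le \tfrac12$.
   Context: For a real Banach space $X$ with unit sphere $S_X=\{x:\|x\|=1\}$, the P-angle between nonzero vectors $u,v$ is $\operatorname{ang}_P(u,v)=\arccos\frac{\|u\|^2+\|v\|^2-\|u-v\|^2}{2\|u\|\|v\|}$. The P-angle constant is $S_P(X)=\sup\{\cos\operatorname{ang}_P(x+y,x-y): x,y\in S_X,\ x\neq \pm y\}$; explicitly, $\cos\operatorname{ang}_P(x+y,x-y)=\frac{\|x+y\|^2+\|x-y\|^2-4}{2\|x+y\|\,\|x-y\|}$ for $x,y\in S_X$, $x\ne\pm y$. *)

From HB Require Import structures.
From mathcomp Require Import all_boot all_order all_algebra.
From mathcomp Require Import all_classical all_reals all_analysis.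
Set Implicit Arguments. Unset Strict Implicit. Unset Printing Implicit Defensive.
Import Order.TTheory GRing.Theory Num.Theory.
Import numFieldNormedType.Exports.
Local Open Scope classical_set_scope.
Local Open Scope ring_scope.

(* cos of the P-angle between x+y and x-y, for x y on the unit sphere *)
Definition cosP_pm {R : realType} {X : normedModType R} (x y : X) : R :=
  (`|x + y| ^+ 2 + `|x - y| ^+ 2 - 4) / (2 * `|x + y| * `|x - y|).

Definition S_P {R : realType} (X : normedModType R) : \bar R :=
  ereal_sup [set r : \bar R | exists x y : X,
     [/\ `|x| = 1, `|y| = 1, x != y, x != - y & r = (cosP_pm x y)%:E]].

Definition dim_ge2 {R : realType} (X : normedModType R) : Prop :=
  exists x y : X, forall a b : R, a *: x + b *: y = 0 -> a = 0 /\ b = 0.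

From HB Require Import structures.
From mathcomp Require Import all_boot all_order all_algebra.
From mathcomp Require Import all_classical all_reals all_analysis.
From mathcomp Require Import ring lra.
Import Order.TTheory GRing.Theory Num.Theory.
Import numFieldNormedType.Exports.
Local Open Scope ring_scope.
Local Open Scope classical_set_scope.

(* Upper bound: writing a = |x + y| and b = |x - y|, both lie in (0, 2], and
   on that square a^2 - a b + b^2 <= 4, which is exactly cos <= 1/2.
   Lower bound: the intermediate value theorem along a path from x to -x in
   the plane of two independent vectors yields unit x, y with
   |x + y| = |x - y| = a.  Then cos(x, y) = 1 - 2/a^2, while the unit pair
   ((x + y)/a, (x - y)/a) has equal diagonals 2/a and cosine 1 - a^2/2; one
   of the two is nonnegative. *)

Section PAngle.
Context {R : realType} {X : normedModType R}.
Implicit Types (x y z w : X) (a : R).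

Definition normalize w : X := `|w|^-1 *: w.

Lemma norm_normalize [w] : w != 0 -> `|normalize w| = 1.
Proof.
by move=> w0; rewrite normrZ ger0_norm ?invr_ge0 // mulVf // normr_eq0.
Qed.

Lemma normalize_continuous_at [f : R -> X] [t] :
  f t != 0 -> {for t, continuous f} -> {for t, continuous (normalize \o f)}.
Proof.
move=> ft0 cf; apply: cvgZ (cf); apply: cvgV; first by rewrite normr_eq0.
exact: (cvg_comp _ _ cf (@norm_continuous _ _ _)).
Qed.

Lemma cosP_pm_le_half [x y] : `|x| = 1 -> `|y| = 1 -> x != y -> x != - y ->
  cosP_pm x y <= 2^-1.
Proof.
move=> nx ny xy xNy.
have a2 : `|x + y| <= 2 by have := ler_normD x y; rewrite nx ny.
have b2 : `|x - y| <= 2 by have := ler_normB x y; rewrite nx ny.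
have a0 : 0 < `|x + y| by rewrite normr_gt0 addr_eq0.
have b0 : 0 < `|x - y| by rewrite normr_gt0 subr_eq0.
rewrite /cosP_pm ler_pdivrMr ?mulr_gt0 //.
move: a2 b2 a0 b0; set a := `|x + y|; set b := `|x - y|; nra.
Qed.

Lemma cosP_pm_equal_diagonals [x y a] :
  `|x + y| = a -> `|x - y| = a -> 0 < a -> cosP_pm x y = 1 - 2 / a ^+ 2.
Proof.
rewrite /cosP_pm => -> -> a0.
by field; rewrite ?pnatr_eq0 ?gt_eqF.
Qed.

Lemma isosceles_diagonal_ge1 [x y] :
  `|x| = 1 -> `|x + y| = `|x - y| -> 1 <= `|x + y|.
Proof.
move=> nx e.
have := ler_normD (x + y) (x - y).
by rewrite addrACA subrr addr0 -mulr2n normrMn nx -e mulr2n; lra.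
Qed.

Lemma exists_cosP_pm_ge0 [x y] :
  `|x| = 1 -> `|y| = 1 -> `|x + y| = `|x - y| ->
  exists u v : X, [/\ `|u| = 1, `|v| = 1, u != v, u != - v & 0 <= cosP_pm u v].
Proof.
move=> nx ny e; have a1 := isosceles_diagonal_ge1 nx e.
move: e a1; set a := `|x + y| => e a1.
have a0 : 0 < a by lra.
have [a22|a22] := lerP 2 (a ^+ 2).
  exists x, y; split => //.
  - by rewrite -subr_eq0 -normr_gt0 -e.
  - by rewrite -addr_eq0 -normr_gt0.
  rewrite (cosP_pm_equal_diagonals erefl (esym e) a0) subr_ge0.
  by rewrite ler_pdivrMr ?exprn_gt0 ?mul1r.
pose u := a^-1 *: (x + y); pose v := a^-1 *: (x - y).
have nu : `|u| = 1 by rewrite norm_normalize // -normr_gt0.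
have nv : `|v| = 1 by rewrite /v e norm_normalize // -normr_gt0 -e.
have uDv : `|u + v| = 2 / a.
  by rewrite -scalerDr addrACA subrr addr0 -mulr2n normrZ normrMn nx gtr0_norm ?invr_gt0 // mulrC.
have uBv : `|u - v| = 2 / a.
  by rewrite -scalerBr opprB addrC addrA subrK -mulr2n normrZ normrMn ny gtr0_norm ?invr_gt0 // mulrC.
have d0 : 0 < 2 / a by rewrite divr_gt0.
exists u, v; split => //.
- by rewrite -subr_eq0 -normr_gt0 uBv.
- by rewrite -addr_eq0 -normr_gt0 uDv.
rewrite (cosP_pm_equal_diagonals uDv uBv d0).
have -> : 2 / (2 / a) ^+ 2 = a ^+ 2 / 2 by field; rewrite gt_eqF.
lra.
Qed.

Definition plane_path x z (t : R) : X := (1 - 2 * t) *: x + (4 * t * (1 - t)) *: z.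

(* The two coefficients of the path never vanish simultaneously. *)
Lemma plane_path_neq0 x z t :
  (forall a b : R, a *: x + b *: z = 0 -> a = 0 /\ b = 0) -> plane_path x z t != 0.
Proof. by move=> ind; apply/eqP => /ind [h1 h2]; nra. Qed.

Lemma plane_path0 x z : plane_path x z 0 = x.
Proof. by rewrite /plane_path !mulr0 subr0 mul0r scale1r scale0r addr0. Qed.

Lemma plane_path1 x z : plane_path x z 1 = - x.
Proof.
rewrite /plane_path mulr1 subrr mulr0 scale0r addr0.
have -> : (1 - 2 : R) = -1 by lra.
by rewrite scaleN1r.
Qed.

Lemma plane_path_continuous x z : continuous (plane_path x z).
Proof.
have cM c : continuous (fun t : R => c * t) by move=> t; exact: cvgM (cvg_cst _) cvg_id.
move=> t; apply: cvgD; apply: cvgZ (cvg_cst _); first exact: cvgB (cvg_cst _) (cM _ _).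
exact: cvgM (cM _ _) (cvgB (cvg_cst _) cvg_id).
Qed.

Lemma exists_unit_isosceles_orthogonal [x] [w : R -> X] :
  `|x| = 1 -> continuous w -> (forall t, w t != 0) -> w 0 = x -> w 1 = - x ->
  exists y, `|y| = 1 /\ `|x + y| = `|x - y|.
Proof.
move=> nx cw w0 wx wNx.
pose F t := `|x + normalize (w t)| - `|x - normalize (w t)|.
have cF : continuous F.
  move=> t; have cn := normalize_continuous_at (w0 t) (cw t).
  apply: cvgB.
    exact: cvg_comp _ _ (cvgD (cvg_cst x) cn) (@norm_continuous _ _ _).
  exact: cvg_comp _ _ (cvgB (cvg_cst x) cn) (@norm_continuous _ _ _).
have nxx : `|x + x| = 2 by rewrite -mulr2n normrMn nx.
have F0 : F 0 = 2 by rewrite /F wx /normalize nx invr1 scale1r subrr normr0 subr0.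
have F1 : F 1 = -2.
  by rewrite /F wNx /normalize normrN nx invr1 scale1r subrr opprK normr0 nxx sub0r.
have [c _ Fc] : exists2 c, c \in `[0, 1]%R & F c = 0.
  apply: IVT => //; first exact: continuous_subspaceT.
  by rewrite F0 F1 ge_min le_max; apply/andP; split; apply/orP; [right|left]; lra.
exists (normalize (w c)); split; first exact: norm_normalize.
by apply/eqP; rewrite -subr_eq0; apply/eqP.
Qed.

Lemma independent_normalize x z :
  (forall a b : R, a *: x + b *: z = 0 -> a = 0 /\ b = 0) ->
  x != 0 /\ (forall a b : R, a *: normalize x + b *: z = 0 -> a = 0 /\ b = 0).
Proof.
move=> ind; have x0 : x != 0.
  apply/eqP => x0; have [] := ind 1 0; first by rewrite x0 scaler0 scale0r addr0.
  by move/eqP; rewrite oner_eq0.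
split=> // a b; rewrite /normalize scalerA => /ind [xa0 ->]; split => //.
by move/eqP: xa0; rewrite mulf_eq0 invr_eq0 normr_eq0 (negbTE x0) orbF => /eqP.
Qed.

End PAngle.

Local Open Scope ereal_scope.

Theorem proposition3p3 (R : realType) (X : completeNormedModType R) :
  dim_ge2 X -> 0%E <= S_P X /\ S_P X <= (1 / 2 : R)%:E.
Proof.
move=> [x0 [z /independent_normalize [x00 ind]]].
have nx := norm_normalize x00.
have [|||y [ny e]] :=
  exists_unit_isosceles_orthogonal nx (plane_path_continuous (normalize x0) z).
- by move=> t; exact: plane_path_neq0.
- exact: plane_path0.
- exact: plane_path1.
have [u [v [nu nv uv uNv c0]]] := exists_cosP_pm_ge0 nx ny e.
split.
  apply: le_ereal_sup_tmp; exists (cosP_pm u v)%:E; last by rewrite lee_fin.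
  by exists u, v; split.
apply: ge_ereal_sup => _ [x1 [y1 [n1 n2 h1 h2 ->]]].
by rewrite lee_fin mul1r; exact: cosP_pm_le_half.
Qed.
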